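(* Let $n\ge 3$, and let $\psi$ be either $\sinh$ (with $R>0$) or $\sin$ (with $0<R<\pi$). Set $K_\psi=-1$ if $\psi=\sinh$ and $K_\psi=1$ if $\psi=\sin$, let $\phi(r):=\int_0^r\psi(s)\,ds$ for $r\in(0,R)$, and $$H_{n,\psi}:=\frac14\left(\Big(\sup_{(0,R)}\frac{\phi}{\psi}\Big)^{-2}-n(n-2)K_\psi\right).$$ Then for every radial function $\xi\in C^1_0(\mathcal{B}_R)$ (viewed as a function of $r\in[0,R]$), $$\int_0^R\psi^{n-1}\xi_r^2\,dr\ \ge\ \frac{(n-2)^2}{4}\int_0^R\psi^{n-1}\frac{\xi^2}{\psi^2}\,dr+H_{n,\psi}\int_0^R\psi^{n-1}\xi^2\,dr.$$ Moreover, if $\psi=\sinh$, or if $\psi=\sin$ and $R<R_0:=\sup\{s\in(0,\pi/2):\frac{\sin^2 s}{(1-\cos s)^2}>n(n-2)\}$, then $H_{n,\psi}>0$, and in particular $$\int_0^R\psi^{n-1}\xi_r^2\,dr\ \ge\ \frac{(n-2)^2}{4}\int_0^R\psi^{n-1}\frac{\xi^2}{\psi^2}\,dr\quad\text{for all radial }\xi\in C^1_0(\mathcal{B}_R).$$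
   Context: $\mathcal{B}_R$ is the geodesic ball of radius $R$ centered at the pole in the Riemannian model with metric $ds^2=dr^2+\psi(r)^2\,d\Theta^2$ (hyperbolic space $\mathbb{H}^n$ for $\psi=\sinh$, elliptic space $\mathbb{S}^n$ for $\psi=\sin$); $r$ is the geodesic distance to the center. *)

From Stdlib Require Import Reals.
From Coquelicot Require Import Coquelicot.
Open Scope R_scope.

Inductive model := Hyperbolic | Elliptic.

Definition psi (m : model) (r : R) : R :=
  match m with Hyperbolic => sinh r | Elliptic => sin r end.

Definition Kpsi (m : model) : R :=
  match m with Hyperbolic => -1 | Elliptic => 1 end.

Definition admissible_radius (m : model) (Rr : R) : Prop :=
  match m with Hyperbolic => 0 < Rr | Elliptic => 0 < Rr /\ Rr < PI end.

Definition phi (m : model) (r : R) : R := RInt (psi m) 0 r.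

Definition sup_set (E : R -> Prop) : R := real (Lub_Rbar E).

Definition sup_phi_psi (m : model) (Rr : R) : R :=
  sup_set (fun y => exists r, 0 < r < Rr /\ y = phi m r / psi m r).

Definition H_const (n : nat) (m : model) (Rr : R) : R :=
  / 4 * (/ (sup_phi_psi m Rr) ^ 2 - INR n * (INR n - 2) * Kpsi m).

Definition R0_threshold (n : nat) : R :=
  sup_set (fun s => 0 < s < PI / 2 /\
                    sin s ^ 2 / (1 - cos s) ^ 2 > INR n * (INR n - 2)).

(* Radial profile of a function in C^1_0(B_R): xi : R -> R is the profile
   r |-> xi(r), extended evenly to negative r (so that the radial function is
   C^1 at the center), C^1 on the line, and vanishing near r = R
   (compact support in the open ball). *)
Definition radial_C1_0 (Rr : R) (xi : R -> R) : Prop :=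
  (forall r, ex_derive xi r) /\
  (forall r, continuous (Derive xi) r) /\
  (forall r, xi (- r) = xi r) /\
  (exists rho, 0 < rho < Rr /\ forall r, rho <= r -> xi r = 0).

From Stdlib Require Import Reals Lra Psatz Lia Classical.
From Coquelicot Require Import Coquelicot.
Open Scope R_scope.

(* Set a := (n-2)/2, s := sup phi/psi, and calibrate with
     F := psi^(n-2) (a psi' + phi / (2 s^2)).
   Since psi(0) = 0 and xi(R) = 0, the integral of (F xi^2)' over [0, R] vanishes.
   Using psi'' = -K psi, psi'^2 = 1 - K psi^2, phi' = psi and 0 <= phi <= s psi,
   the integrand psi^(n-1) xi'^2 + (F xi^2)' minus the right-hand side integrand
   is the sum of squares
     psi^(n-3) (psi xi' + (a psi' + phi/(2 s^2)) xi)^2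
       + psi^(n-3) xi^2 ((s psi)^2 - phi^2) / (4 s^4).
   H is positive for sinh since K = -1; for sin, phi/psi = tan(r/2) is increasing,
   so s <= tan(t/2) for every R < t, and sin^2 t / (1 - cos t)^2 = 1 / tan^2(t/2). *)

Lemma continuous_pow (f : R -> R) (k : nat) (x : R) :
  continuous f x -> continuous (fun t => f t ^ k) x.
Proof.
  intros Hf. induction k as [|k IHk]; simpl.
  - apply continuous_const.
  - apply (continuous_mult (K := R_AbsRing)); assumption.
Qed.

Ltac solve_continuous :=
  repeat match goal with
  | |- continuous (fun _ => ?c) _ => apply continuous_const
  | |- continuous (fun _ => _ + _) _ => apply (continuous_plus (V := R_NormedModule))
  | |- continuous (fun _ => _ * _) _ => apply (continuous_mult (K := R_AbsRing))
  | |- continuous (fun _ => _ ^ _) _ => apply continuous_pow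
  | |- _ => assumption
  end.

Lemma is_derive_continuous (f : R -> R) (x l : R) : is_derive f x l -> continuous f x.
Proof. intros H. apply (ex_derive_continuous (V := R_NormedModule)). exists l; exact H. Qed.

Lemma RInt_lincomb_le (f g h1 h2 : R -> R) (A B a b : R) :
  a <= b -> ex_RInt f a b -> ex_RInt g a b -> ex_RInt h1 a b -> ex_RInt h2 a b ->
  RInt g a b = 0 ->
  (forall x, a < x < b -> A * h1 x + B * h2 x <= f x + g x) ->
  A * RInt h1 a b + B * RInt h2 a b <= RInt f a b.
Proof.
  intros Hab Hf Hg Hh1 Hh2 Hg0 Hle.
  assert (HA : ex_RInt (fun x => A * h1 x) a b) by exact (ex_RInt_scal h1 a b A Hh1).
  assert (HB : ex_RInt (fun x => B * h2 x) a b) by exact (ex_RInt_scal h2 a b B Hh2).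
  assert (Hint : RInt (fun x => A * h1 x + B * h2 x) a b <= RInt (fun x => f x + g x) a b).
  { apply RInt_le; [exact Hab | exact (ex_RInt_plus _ _ a b HA HB) |
                    exact (ex_RInt_plus _ _ a b Hf Hg) | exact Hle]. }
  assert (E1 : RInt (fun x => A * h1 x + B * h2 x) a b
               = RInt (fun x => A * h1 x) a b + RInt (fun x => B * h2 x) a b)
    by exact (RInt_plus _ _ a b HA HB).
  assert (E2 : RInt (fun x => f x + g x) a b = RInt f a b + RInt g a b)
    by exact (RInt_plus f g a b Hf Hg).
  assert (E3 : RInt (fun x => A * h1 x) a b = A * RInt h1 a b)
    by exact (RInt_scal h1 a b A Hh1).
  assert (E4 : RInt (fun x => B * h2 x) a b = B * RInt h2 a b)
    by exact (RInt_scal h2 a b B Hh2).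
  rewrite E1, E2, E3, E4, Hg0 in Hint.
  lra.
Qed.

Lemma hardy_pointwise (q P D Y V X K s a : R) :
  0 <= q -> 0 < P -> 0 < s -> D ^ 2 = 1 - K * P ^ 2 -> 0 <= Y <= s * P ->
  let c := / (2 * s ^ 2) in
  a ^ 2 * (q * P ^ 2 * (X ^ 2 / P ^ 2))
    + / 4 * (/ s ^ 2 - 4 * a * (a + 1) * K) * (q * P ^ 2 * X ^ 2)
  <= q * P ^ 2 * V ^ 2
     + (2 * a * D * q * (a * D + c * Y) + q * P * (- a * K * P + c * P)) * X ^ 2
     + q * P * (a * D + c * Y) * (2 * V * X).
Proof.
  intros Hq HP Hs HD HY c.
  assert (Hsquares :
    q * P ^ 2 * V ^ 2
      + (2 * a * D * q * (a * D + c * Y) + q * P * (- a * K * P + c * P)) * X ^ 2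
      + q * P * (a * D + c * Y) * (2 * V * X)
    - (a ^ 2 * (q * P ^ 2 * (X ^ 2 / P ^ 2))
       + / 4 * (/ s ^ 2 - 4 * a * (a + 1) * K) * (q * P ^ 2 * X ^ 2))
    = q * (P * V + (a * D + c * Y) * X) ^ 2
      + q * X ^ 2 * c ^ 2 * ((s * P) ^ 2 - Y ^ 2)
      + a ^ 2 * q * X ^ 2 * (D ^ 2 - (1 - K * P ^ 2))).
  { unfold c. field. lra. }
  rewrite HD, Rminus_diag, Rmult_0_r, Rplus_0_r in Hsquares.
  assert (0 <= q * (P * V + (a * D + c * Y) * X) ^ 2)
    by (apply Rmult_le_pos; [lra | apply pow2_ge_0]).
  assert (0 <= q * X ^ 2 * c ^ 2 * ((s * P) ^ 2 - Y ^ 2)).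
  { apply Rmult_le_pos; [| nra].
    apply Rmult_le_pos; [apply Rmult_le_pos; [lra | apply pow2_ge_0] | apply pow2_ge_0]. }
  lra.
Qed.

Section WeightedHardy.

Variables (p dp Ph xi : R -> R) (K s Rr : R) (n : nat).

Hypotheses
  (Hn : (3 <= n)%nat)
  (Hp : forall x, is_derive p x (dp x))
  (Hdp : forall x, is_derive dp x (- K * p x))
  (HPh : forall x, is_derive Ph x (p x))
  (Hdp_sqr : forall x, dp x ^ 2 = 1 - K * p x ^ 2)
  (Hp0 : p 0 = 0)
  (Hp_pos : forall r, 0 < r < Rr -> 0 < p r)
  (HPh_bound : forall r, 0 < r < Rr -> 0 <= Ph r <= s * p r)
  (Hs : 0 < s)
  (HRr : 0 < Rr)
  (Hxi : forall r, ex_derive xi r)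
  (Hxi' : forall r, continuous (Derive xi) r)
  (Hxi_Rr : xi Rr = 0).

Let a := (INR n - 2) / 2.
Let c := / (2 * s ^ 2).
Let F r := p r ^ (n - 2) * (a * dp r + c * Ph r).
Let dF r := INR (n - 2) * dp r * p r ^ (n - 3) * (a * dp r + c * Ph r)
            + p r ^ (n - 2) * (- a * K * p r + c * p r).
Let G r := F r * xi r ^ 2.
Let dG r := dF r * xi r ^ 2 + F r * (2 * Derive xi r * xi r).

Lemma is_derive_G x : is_derive G x (dG x).
Proof.
  unfold G, dG, dF, F.
  auto_derive.
  - repeat split; solve [apply Hxi | eexists; eauto].
  - rewrite (is_derive_unique (fun t : R => p t) x _ (Hp x)),
      (is_derive_unique (fun t : R => dp t) x _ (Hdp x)),
      (is_derive_unique (fun t : R => Ph t) x _ (HPh x)).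
    replace (Init.Nat.pred (n - 2)) with (n - 3)%nat by lia.
    change (Derive (fun t : R => xi t) x) with (Derive xi x).
    ring.
Qed.

Lemma continuous_dG x : continuous dG x.
Proof.
  pose proof (is_derive_continuous _ _ _ (Hp x)).
  pose proof (is_derive_continuous _ _ _ (Hdp x)).
  pose proof (is_derive_continuous _ _ _ (HPh x)).
  pose proof (ex_derive_continuous (V := R_NormedModule) xi x (Hxi x)).
  pose proof (Hxi' x).
  unfold dG, dF, F. solve_continuous.
Qed.

Lemma RInt_dG : RInt dG 0 Rr = 0.
Proof.
  assert (H : is_RInt dG 0 Rr (minus (G Rr) (G 0))).
  { apply (is_RInt_derive (V := R_CompleteNormedModule)); intros x _;
      [apply is_derive_G | apply continuous_dG]. }
  rewrite (is_RInt_unique _ _ _ _ H).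
  change (G Rr - G 0 = 0). unfold G, F.
  rewrite Hxi_Rr, Hp0, (pow_i (n - 2)) by lia. ring.
Qed.

Lemma weighted_hardy_pointwise r : 0 < r < Rr ->
  (INR n - 2) ^ 2 / 4 * (p r ^ (n - 1) * (xi r ^ 2 / p r ^ 2))
  + / 4 * (/ s ^ 2 - INR n * (INR n - 2) * K) * (p r ^ (n - 1) * xi r ^ 2)
  <= p r ^ (n - 1) * Derive xi r ^ 2 + dG r.
Proof.
  intros Hr.
  pose proof (Hp_pos r Hr) as HP.
  assert (Hq : 0 <= p r ^ (n - 3)) by (apply pow_le; lra).
  pose proof (hardy_pointwise _ _ _ _ (Derive xi r) (xi r) K s a Hq HP Hs
                (Hdp_sqr r) (HPh_bound r Hr)) as H.
  unfold dG, dF, F.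
  rewrite (minus_INR n 2) by lia.
  replace (n - 2)%nat with (S (n - 3)) by lia.
  replace (n - 1)%nat with (S (S (n - 3))) by lia.
  simpl pow. simpl INR.
  unfold a, c in *.
  eapply Rle_trans; [apply Req_le | eapply Rle_trans; [exact H | apply Req_le]];
    field; lra.
Qed.

Lemma ex_RInt_weighted (f : R -> R) (k : nat) :
  (forall r, continuous f r) -> ex_RInt (fun r => p r ^ k * f r ^ 2) 0 Rr.
Proof.
  intros Hf. apply (ex_RInt_continuous (V := R_CompleteNormedModule)); intros x _.
  pose proof (is_derive_continuous _ _ _ (Hp x)). pose proof (Hf x).
  solve_continuous.
Qed.

Lemma weighted_hardy :
  RInt (fun r => p r ^ (n - 1) * Derive xi r ^ 2) 0 Rr >=
    (INR n - 2) ^ 2 / 4 * RInt (fun r => p r ^ (n - 1) * (xi r ^ 2 / p r ^ 2)) 0 Rr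
    + / 4 * (/ s ^ 2 - INR n * (INR n - 2) * K) * RInt (fun r => p r ^ (n - 1) * xi r ^ 2) 0 Rr.
Proof.
  pose proof (ex_derive_continuous (V := R_NormedModule) xi) as Hxi_cont.
  apply Rle_ge, (RInt_lincomb_le _ dG); try lra.
  - apply ex_RInt_weighted; exact Hxi'.
  - apply (ex_RInt_continuous (V := R_CompleteNormedModule)); intros x _.
    apply continuous_dG.
  - apply (ex_RInt_ext (fun r => p r ^ (n - 3) * xi r ^ 2)).
    + rewrite Rmin_left, Rmax_right by lra. intros x Hx.
      pose proof (Hp_pos x Hx).
      replace (n - 1)%nat with (S (S (n - 3))) by lia. simpl. field. lra.
    + apply ex_RInt_weighted; intros r; apply Hxi_cont, Hxi.
  - apply ex_RInt_weighted; intros r; apply Hxi_cont, Hxi.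
  - exact RInt_dG.
  - exact weighted_hardy_pointwise.
Qed.

Lemma RInt_weighted_nonneg :
  0 <= RInt (fun r => p r ^ (n - 1) * xi r ^ 2) 0 Rr.
Proof.
  apply RInt_ge_0; [lra | | ].
  - apply ex_RInt_weighted; intros r; apply (ex_derive_continuous (V := R_NormedModule)), Hxi.
  - intros x Hx. pose proof (Hp_pos x Hx).
    apply Rmult_le_pos; [apply pow_le; lra | apply pow2_ge_0].
Qed.

End WeightedHardy.

Lemma exp_mul_exp_opp x : exp x * exp (- x) = 1.
Proof. rewrite <- exp_plus, Rplus_opp_r. apply exp_0. Qed.

Lemma cosh_sub_1_pos r : 0 < r -> 0 < cosh r - 1.
Proof.
  intros Hr. unfold cosh.
  pose proof (exp_mul_exp_opp r). pose proof (exp_pos (- r)).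
  assert (1 < exp r) by (rewrite <- exp_0; apply exp_increasing; lra).
  nra.
Qed.

Lemma cosh_sub_1_le_sinh r : 0 <= r -> cosh r - 1 <= sinh r.
Proof.
  intros Hr. unfold cosh, sinh.
  assert (exp (- r) <= 1).
  { rewrite <- exp_0. destruct Hr as [Hr | <-].
    - left. apply exp_increasing. lra.
    - rewrite Ropp_0. lra. }
  lra.
Qed.

Lemma one_sub_cos_eq_tan_half_mul_sin r :
  cos (r / 2) <> 0 -> 1 - cos r = tan (r / 2) * sin r.
Proof.
  intros Hc. replace r with (2 * (r / 2)) at 1 3 by field.
  rewrite cos_2a_sin, sin_2a. unfold tan. field. exact Hc.
Qed.

Definition dpsi (m : model) (r : R) : R :=
  match m with Hyperbolic => cosh r | Elliptic => cos r end.

Definition phi_closed (m : model) (r : R) : R :=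
  match m with Hyperbolic => cosh r - 1 | Elliptic => 1 - cos r end.

Lemma is_derive_psi m x : is_derive (psi m) x (dpsi m x).
Proof.
  destruct m; apply is_derive_Reals;
    [apply derivable_pt_lim_sinh | apply derivable_pt_lim_sin].
Qed.

Lemma is_derive_dpsi m x : is_derive (dpsi m) x (- Kpsi m * psi m x).
Proof.
  destruct m; simpl; apply is_derive_Reals.
  - replace (- -1 * sinh x) with (sinh x) by ring. apply derivable_pt_lim_cosh.
  - replace (- (1) * sin x) with (- sin x) by ring. apply derivable_pt_lim_cos.
Qed.

Lemma is_derive_phi_closed m x : is_derive (phi_closed m) x (psi m x).
Proof.
  destruct m; simpl; apply is_derive_Reals.
  - replace (sinh x) with (sinh x - 0) by ring.
    apply derivable_pt_lim_minus; [apply derivable_pt_lim_cosh | apply derivable_pt_lim_const].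
  - replace (sin x) with (0 - - sin x) by ring.
    apply derivable_pt_lim_minus; [apply derivable_pt_lim_const | apply derivable_pt_lim_cos].
Qed.

Lemma dpsi_sqr m x : dpsi m x ^ 2 = 1 - Kpsi m * psi m x ^ 2.
Proof.
  destruct m; simpl.
  - unfold cosh, sinh. pose proof (exp_mul_exp_opp x). nra.
  - pose proof (sin2_cos2 x) as H. unfold Rsqr in H. nra.
Qed.

Lemma psi_0 m : psi m 0 = 0.
Proof. destruct m; simpl; [apply sinh_0 | apply sin_0]. Qed.

Lemma phi_closed_0 m : phi_closed m 0 = 0.
Proof. destruct m; simpl; [rewrite cosh_0 | rewrite cos_0]; ring. Qed.

Lemma psi_pos m Rr r : admissible_radius m Rr -> 0 < r < Rr -> 0 < psi m r.
Proof.
  destruct m; simpl; intros HR Hr.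
  - rewrite <- sinh_0. apply sinh_lt. lra.
  - apply sin_gt_0; lra.
Qed.

Lemma phi_eq_phi_closed m r : phi m r = phi_closed m r.
Proof.
  assert (H : is_RInt (psi m) 0 r (minus (phi_closed m r) (phi_closed m 0))).
  { apply (is_RInt_derive (V := R_CompleteNormedModule)); intros x _.
    - apply is_derive_phi_closed.
    - exact (is_derive_continuous _ _ _ (is_derive_psi m x)). }
  unfold phi. rewrite (is_RInt_unique _ _ _ _ H).
  change (phi_closed m r - phi_closed m 0 = phi_closed m r).
  rewrite phi_closed_0. ring.
Qed.

Lemma is_derive_phi m x : is_derive (phi m) x (psi m x).
Proof.
  apply (is_derive_ext (phi_closed m)); [intros t; symmetry; apply phi_eq_phi_closed |].
  apply is_derive_phi_closed.
Qed.

Lemma elliptic_phi_closed_le r t :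
  0 < r <= t -> t < PI -> phi_closed Elliptic r <= tan (t / 2) * psi Elliptic r.
Proof.
  intros Hr Ht. simpl.
  assert (Hcos : cos (r / 2) <> 0) by (apply Rgt_not_eq, cos_gt_0; lra).
  rewrite (one_sub_cos_eq_tan_half_mul_sin r Hcos).
  apply Rmult_le_compat_r; [left; apply sin_gt_0; lra |].
  destruct (Req_dec r t) as [-> | Hne]; [lra |].
  left. apply tan_increasing; lra.
Qed.

Lemma phi_closed_pos m Rr r : admissible_radius m Rr -> 0 < r < Rr -> 0 < phi_closed m r.
Proof.
  destruct m; simpl; intros HR Hr.
  - apply cosh_sub_1_pos. lra.
  - rewrite <- cos_0. assert (cos r < cos 0) by (apply cos_decreasing_1; lra). lra.
Qed.

Lemma phi_closed_bounded m Rr : admissible_radius m Rr ->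
  exists M, forall r, 0 < r < Rr -> phi_closed m r <= M * psi m r.
Proof.
  destruct m; simpl; intros HR.
  - exists 1. intros r Hr. rewrite Rmult_1_l. apply cosh_sub_1_le_sinh. lra.
  - exists (tan (Rr / 2)). intros r Hr. apply elliptic_phi_closed_le; lra.
Qed.

Lemma sup_set_ge (E : R -> Prop) (M y : R) :
  (forall z, E z -> z <= M) -> E y -> y <= sup_set E.
Proof.
  intros HM Hy. unfold sup_set.
  destruct (Lub_Rbar_correct E) as [Hub Hleast].
  assert (HbM : is_ub_Rbar E M) by (intros z Hz; apply HM, Hz).
  specialize (Hleast _ HbM). specialize (Hub y Hy).
  destruct (Lub_Rbar E); simpl in *; tauto.
Qed.

Lemma sup_set_le (E : R -> Prop) (M y : R) :
  (forall z, E z -> z <= M) -> E y -> sup_set E <= M.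
Proof.
  intros HM Hy. unfold sup_set.
  destruct (Lub_Rbar_correct E) as [Hub Hleast].
  assert (HbM : is_ub_Rbar E M) by (intros z Hz; apply HM, Hz).
  specialize (Hleast _ HbM). specialize (Hub y Hy).
  destruct (Lub_Rbar E); simpl in *; tauto.
Qed.

Lemma sup_set_gt_witness (E : R -> Prop) (x : R) :
  0 < x -> x < sup_set E -> exists s, E s /\ x < s.
Proof.
  intros Hx Hs. apply NNPP. intros Hnone.
  assert (Hub : is_ub_Rbar E x).
  { intros y Hy. apply Rnot_lt_le. intros Hlt. apply Hnone. exists y; auto. }
  unfold sup_set in Hs. destruct (Lub_Rbar_correct E) as [_ Hleast].
  specialize (Hleast _ Hub).
  destruct (Lub_Rbar E); simpl in *; lra.
Qed.

Lemma admissible_radius_pos m Rr : admissible_radius m Rr -> 0 < Rr.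
Proof. destruct m; simpl; lra. Qed.

Section SupPhiPsi.

Variables (m : model) (Rr M : R).
Hypotheses (HR : admissible_radius m Rr)
  (HM : forall r, 0 < r < Rr -> phi_closed m r <= M * psi m r).

Let E := fun y => exists r, 0 < r < Rr /\ y = phi m r / psi m r.

Lemma phi_psi_ratio_le y : E y -> y <= M.
Proof.
  intros [r [Hr ->]]. pose proof (psi_pos m Rr r HR Hr).
  rewrite phi_eq_phi_closed. apply Rle_div_l; [lra |]. apply HM, Hr.
Qed.

Lemma phi_psi_ratio_at_half : E (phi m (Rr / 2) / psi m (Rr / 2)).
Proof. pose proof (admissible_radius_pos m Rr HR). exists (Rr / 2). split; [lra | reflexivity]. Qed.

Lemma phi_le_sup_phi_psi_mul r : 0 < r < Rr -> phi m r <= sup_phi_psi m Rr * psi m r.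
Proof.
  intros Hr. pose proof (psi_pos m Rr r HR Hr).
  apply Rle_div_l; [lra |].
  apply (sup_set_ge _ M); [exact phi_psi_ratio_le | exists r; auto].
Qed.

Lemma sup_phi_psi_pos : 0 < sup_phi_psi m Rr.
Proof.
  pose proof (admissible_radius_pos m Rr HR).
  apply Rlt_le_trans with (phi m (Rr / 2) / psi m (Rr / 2)).
  - rewrite phi_eq_phi_closed.
    apply Rdiv_lt_0_compat; [apply (phi_closed_pos m Rr) | apply (psi_pos m Rr)]; auto; lra.
  - apply (sup_set_ge _ M); [exact phi_psi_ratio_le | exact phi_psi_ratio_at_half].
Qed.

Lemma sup_phi_psi_le : sup_phi_psi m Rr <= M.
Proof. apply (sup_set_le _ M _ phi_psi_ratio_le phi_psi_ratio_at_half). Qed.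

End SupPhiPsi.

Lemma elliptic_threshold_bound n Rr : 0 < Rr < PI -> Rr < R0_threshold n ->
  INR n * (INR n - 2) < / sup_phi_psi Elliptic Rr ^ 2.
Proof.
  intros HR Hthreshold.
  destruct (sup_set_gt_witness _ Rr ltac:(lra) Hthreshold) as [t [[Ht Hthr] HRt]].
  assert (HR' : admissible_radius Elliptic Rr) by exact HR.
  assert (Hbound : forall r, 0 < r < Rr -> phi_closed Elliptic r <= tan (t / 2) * psi Elliptic r)
    by (intros r Hr; apply elliptic_phi_closed_le; lra).
  pose proof (sup_phi_psi_pos _ _ _ HR' Hbound) as Hpos.
  pose proof (sup_phi_psi_le _ _ _ HR' Hbound) as Hle.
  assert (Hcos : cos (t / 2) <> 0) by (apply Rgt_not_eq, cos_gt_0; lra).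
  pose proof (one_sub_cos_eq_tan_half_mul_sin t Hcos) as Htan.
  pose proof (sin_gt_0 t ltac:(lra) ltac:(lra)) as Hsin.
  assert (Hcos1 : 0 < 1 - cos t) by (rewrite Htan; nra).
  replace (sin t ^ 2 / (1 - cos t) ^ 2) with (/ tan (t / 2) ^ 2) in Hthr
    by (rewrite Htan; field; split; nra).
  assert (/ tan (t / 2) ^ 2 <= / sup_phi_psi Elliptic Rr ^ 2).
  { apply Rinv_le_contravar; [apply pow_lt; lra |].
    apply pow_incr. lra. }
  lra.
Qed.

Lemma H_const_pos n m Rr : (3 <= n)%nat -> admissible_radius m Rr ->
  m = Hyperbolic \/ (m = Elliptic /\ Rr < R0_threshold n) -> 0 < H_const n m Rr.
Proof.
  intros Hn HR Hcase. unfold H_const.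
  destruct Hcase as [-> | [-> Hthreshold]]; simpl Kpsi.
  - assert (3 <= INR n) by (apply (le_INR 3 n) in Hn; simpl in Hn; lra).
    assert (0 <= / sup_phi_psi Hyperbolic Rr ^ 2)
      by (rewrite <- pow_inv; apply pow2_ge_0).
    nra.
  - pose proof (elliptic_threshold_bound n Rr HR Hthreshold). lra.
Qed.

Lemma radial_hardy_with_remainder n m Rr xi :
  (3 <= n)%nat -> admissible_radius m Rr -> radial_C1_0 Rr xi ->
  RInt (fun r => psi m r ^ (n - 1) * (Derive xi r) ^ 2) 0 Rr >=
    (INR n - 2) ^ 2 / 4 *
      RInt (fun r => psi m r ^ (n - 1) * (xi r ^ 2 / psi m r ^ 2)) 0 Rr
    + H_const n m Rr * RInt (fun r => psi m r ^ (n - 1) * xi r ^ 2) 0 Rr.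
Proof.
  intros Hn HR [Hxi [Hxi' [_ [rho [Hrho Hsupp]]]]].
  destruct (phi_closed_bounded m Rr HR) as [M HM].
  apply (weighted_hardy (psi m) (dpsi m) (phi m)); auto.
  - apply is_derive_psi.
  - apply is_derive_dpsi.
  - apply is_derive_phi.
  - apply dpsi_sqr.
  - apply psi_0.
  - intros r Hr. apply (psi_pos m Rr r HR Hr).
  - intros r Hr. split.
    + rewrite phi_eq_phi_closed. left. apply (phi_closed_pos m Rr r HR Hr).
    + apply (phi_le_sup_phi_psi_mul m Rr M HR HM r Hr).
  - apply (sup_phi_psi_pos m Rr M HR HM).
  - apply (admissible_radius_pos m Rr HR).
  - apply Hsupp. lra.
Qed.

Lemma radial_weighted_norm_nonneg n m Rr xi :
  admissible_radius m Rr -> radial_C1_0 Rr xi ->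
  0 <= RInt (fun r => psi m r ^ (n - 1) * xi r ^ 2) 0 Rr.
Proof.
  intros HR [Hxi _].
  apply (RInt_weighted_nonneg (psi m) (dpsi m)).
  - apply is_derive_psi.
  - intros r Hr. apply (psi_pos m Rr r HR Hr).
  - apply (admissible_radius_pos m Rr HR).
  - exact Hxi.
Qed.

Theorem proposition1p8 (n : nat) (m : model) (Rr : R) :
  (3 <= n)%nat -> admissible_radius m Rr ->
  (forall xi : R -> R, radial_C1_0 Rr xi ->
     RInt (fun r => psi m r ^ (n - 1) * (Derive xi r) ^ 2) 0 Rr >=
       (INR n - 2) ^ 2 / 4 *
         RInt (fun r => psi m r ^ (n - 1) * (xi r ^ 2 / psi m r ^ 2)) 0 Rr
       + H_const n m Rr * RInt (fun r => psi m r ^ (n - 1) * xi r ^ 2) 0 Rr)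
  /\
  ((m = Hyperbolic \/ (m = Elliptic /\ Rr < R0_threshold n)) ->
     0 < H_const n m Rr /\
     forall xi : R -> R, radial_C1_0 Rr xi ->
       RInt (fun r => psi m r ^ (n - 1) * (Derive xi r) ^ 2) 0 Rr >=
         (INR n - 2) ^ 2 / 4 *
           RInt (fun r => psi m r ^ (n - 1) * (xi r ^ 2 / psi m r ^ 2)) 0 Rr).
Proof.
  intros Hn HR. split.
  - intros xi Hxi. exact (radial_hardy_with_remainder n m Rr xi Hn HR Hxi).
  - intros Hcase. pose proof (H_const_pos n m Rr Hn HR Hcase) as HH.
    split; [exact HH |]. intros xi Hxi.
    pose proof (radial_hardy_with_remainder n m Rr xi Hn HR Hxi) as Hhardy.
    pose proof (radial_weighted_norm_nonneg n m Rr xi HR Hxi) as Hnorm.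
    pose proof (Rmult_le_pos _ _ (Rlt_le _ _ HH) Hnorm). lra.
Qed.
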